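(* Let $q\in(0,1]$. Consider the parametric convex semi-infinite problem described in the context, and let $(\bar c,\bar b)\in\mathbb{R}^n\times\mathcal{C}(T,\mathbb{R})$ and $\bar x\in\mathcal{S}(\bar c,\bar b)$. Assume that $P(\bar c,\bar b)$ satisfies the Slater condition. Consider the statements: (i) $\mathcal{S}$ is $q$-order calm at $((\bar c,\bar b),\bar x)$; (ii) $\mathcal{S}_{\bar c}$ is $q$-order calm at $(\bar b,\bar x)$; (iii) $\mathcal{L}$ is $q$-order calm at $((f(\bar x)+\langle\bar c,\bar x\rangle,\bar b),\bar x)$; (iv) $\bar f$ admits a $q$-order local error bound at $\bar x$, i.e. there exist $\tau>0$, $\delta>0$ with $\tau\, d(x,[\bar f\le 0])\le [\max\{\bar f(x),0\}]^q$ for all $x$ with $\|x-\bar x\|<\delta$. Then (iii) $\Leftrightarrow$ (iv) $\Rightarrow$ (i) $\Rightarrow$ (ii). In addition, if $f$ and all $g_t$ ($t\in T$) are linear, then (i) $\Leftrightarrow$ (ii) $\Leftrightarrow$ (iii) $\Leftrightarrow$ (iv).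
   Context: Setting: $T$ is a compact subset of a metric space $Z$ with $T\neq Z$; $f:\mathbb{R}^n\to\mathbb{R}$ and $g_t:\mathbb{R}^n\to\mathbb{R}$ ($t\in T$) are convex, and $(t,x)\mapsto g_t(x)$ is continuous on $T\times\mathbb{R}^n$. $\mathcal{C}(T,\mathbb{R})$ is the space of continuous functions $b:T\to\mathbb{R}$, $t\mapsto b_t$, with $\|b\|_\infty=\max_{t\in T}|b_t|$. For $(c,b)\in\mathbb{R}^n\times\mathcal{C}(T,\mathbb{R})$ the problem $P(c,b)$ is: minimize $f(x)+\langle c,x\rangle$ subject to $g_t(x)\le b_t$ for all $t\in T$. The parameter space carries the norm $\|(c,b)\|=\max\{\|c\|,\|b\|_\infty\}$ ($\|\cdot\|$ Euclidean on $\mathbb{R}^n$). $\mathcal{S}(c,b)$ is the set of optimal solutions of $P(c,b)$; $\mathcal{S}_c(b):=\mathcal{S}(c,b)$ for fixed $c$; $\mathcal{F}(b):=\{x: g_t(x)\le b_t,\ t\in T\}$. $P(c,b)$ satisfies the Slater condition if there is $\hat x$ with $g_t(\hat x)<b_t$ for all $t\in T$. The level set mapping $\mathcal{L}:\mathbb{R}\times\mathcal{C}(T,\mathbb{R})\rightrightarrows\mathbb{R}^n$ is $\mathcal{L}(\alpha,b)=\{x: f(x)+\langle\bar c,x\rangle\le\alpha,\ g_t(x)\le b_t,\ t\in T\}$, with $\mathbb{R}\times\mathcal{C}(T,\mathbb{R})$ normed by $\max\{|\alpha|,\|b\|_\infty\}$. The supremum function is $\bar f(x):=\sup\{f(x)-f(\bar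 x)+\langle\bar c,x-\bar x\rangle;\ g_t(x)-\bar b_t,\ t\in T\}$, and $[\bar f\le0]=\{x:\bar f(x)\le0\}$. For a set-valued map $S:Y\rightrightarrows X$ between metric spaces, $(\bar y,\bar x)\in\operatorname{gph}S$ and $q>0$, $S$ is $q$-order calm at $(\bar y,\bar x)$ if there exist $\tau>0$ and neighbourhoods $U$ of $\bar x$, $V$ of $\bar y$ such that $\tau\, d(x,S(\bar y))\le d(y,\bar y)^q$ for all $y\in V$ and $x\in S(y)\cap U$. *)

From HB Require Import structures.
From mathcomp Require Import all_boot all_order all_algebra.
From mathcomp Require Import all_classical all_reals all_analysis.
Set Implicit Arguments. Unset Strict Implicit. Unset Printing Implicit Defensive.
Import Order.TTheory GRing.Theory Num.Theory.
Import numFieldNormedType.Exports.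
Local Open Scope classical_set_scope.
Local Open Scope ring_scope.

Section Defs.
Variables (R : realType) (n : nat).

Definition dotp (u v : 'rV[R]_n) : R := \sum_(i < n) u ord0 i * v ord0 i.
Definition enorm (u : 'rV[R]_n) : R := Num.sqrt (dotp u u).
Definition eucl_dist (u v : 'rV[R]_n) : R := enorm (u - v).

(* distance from a point to a set (for a given distance function);
   only used for nonempty sets *)
Definition set_dist {X : Type} (d : X -> X -> R) (x : X) (A : set X) : R :=
  inf [set d x a | a in A].

Definition convex_fun (h : 'rV[R]_n -> R) : Prop :=
  forall x y (l : R), 0 <= l -> l <= 1 ->
    h (l *: x + (1 - l) *: y) <= l * h x + (1 - l) * h y.

Definition linear_fun (h : 'rV[R]_n -> R) : Prop :=
  (forall x y, h (x + y) = h x + h y) /\ (forall (l : R) x, h (l *: x) = l * h x).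

Variables (Z : metricType R) (T : set Z).

(* sup norm on C(T,R) (functions Z -> R continuous on T; only values on T matter) *)
Definition supnormT (b : Z -> R) : R := sup [set `|b t| | t in T].
Definition is_CT (b : Z -> R) : Prop := {within T, continuous b}.

Variables (f : 'rV[R]_n -> R) (g : Z -> 'rV[R]_n -> R).

Definition feas (b : Z -> R) : set 'rV[R]_n :=
  [set x | forall t, T t -> g t x <= b t].

Definition optsol (c : 'rV[R]_n) (b : Z -> R) : set 'rV[R]_n :=
  [set x | feas b x /\ forall y, feas b y -> f x + dotp c x <= f y + dotp c y].

Definition slater (b : Z -> R) : Prop :=
  exists xh : 'rV[R]_n, forall t, T t -> g t xh < b t.

Definition levelmap (cbar : 'rV[R]_n) (ab : R * (Z -> R)) : set 'rV[R]_n :=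
  [set x | f x + dotp cbar x <= ab.1 /\ feas ab.2 x].

Definition supfun (cbar : 'rV[R]_n) (bbar : Z -> R) (xbar : 'rV[R]_n)
    (x : 'rV[R]_n) : R :=
  sup ([set f x - f xbar + dotp cbar (x - xbar)]
       `|` [set g t x - bbar t | t in T]).

End Defs.

(* q-order calmness of S : Y ==> X at (ybar, xbar), where the parameter
   space is the subset Ydom of Y with distance dY, and X has distance dX;
   neighbourhoods are expressed through balls. *)
Definition q_calm {R : realType} {Y X : Type} (Ydom : set Y)
    (dY : Y -> Y -> R) (dX : X -> X -> R) (S : Y -> set X) (q : R)
    (ybar : Y) (xbar : X) : Prop :=
  exists tau : R, 0 < tau /\ exists eps : R, 0 < eps /\ exists delta : R, 0 < delta /\
    forall y, Ydom y -> dY y ybar < delta ->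
    forall x, S y x -> dX x xbar < eps ->
      tau * set_dist dX x (S ybar) <= powR (dY y ybar) q.

(* The optimal set S(cbar, bbar) and the level set L(abar, bbar), abar the optimal
   value, both coincide with [fbar <= 0], and more generally L(abar + r, bbar + r)
   = [fbar <= r].  So calmness of a solution map at the nominal parameter and a
   q-order error bound for fbar are interchangeable, given either
   (a) a residual estimate: points of S(y) near xbar satisfy
       max (fbar x) 0 <= K d(y, ybar), which yields the error bound => calmness; or
   (b) a perturbation estimate: every x lies in S(y) for some y with
       d(y, ybar) <= K max (fbar x) 0, which yields calmness => the error bound.
   For level sets both are immediate (take y = (abar + r, bbar + r) in (b)).  For
   optimal sets, (a) follows from convexity and Slater's condition: moving xbar
   towards a Slater point by the fraction d / eps of the perturbation restores
   feasibility.  In the linear case (b) holds for right-hand side perturbations: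
   KKT multipliers lam_i at finitely many indices t_i show that x is optimal for
   b_t = max (g_t x) (bbar_t - K r), because the complementarity condition bounds
   the slack bbar - g x at every t_i with lam_i > 0 by a multiple of r.  The
   multipliers come from a Farkas alternative for the compact set
   {(bbar_t - g_t xbar, grad g_t)}, proved by projecting onto the cone it
   generates; Caratheodory's theorem and the Slater direction make the projection
   a minimum over a compact set. *)

From HB Require Import structures.
From mathcomp Require Import all_boot all_order all_algebra.
From mathcomp Require Import all_classical all_reals all_analysis.
From mathcomp Require Import ring lra.
Import Order.TTheory GRing.Theory Num.Theory.
Import numFieldNormedType.Exports.
Local Open Scope classical_set_scope.
Local Open Scope ring_scope.
Set Implicit Arguments. Unset Strict Implicit. Unset Printing Implicit Defensive.

Section Euclidean.
Variables (R : realType) (n : nat).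
Implicit Types u v w : 'rV[R]_n.

Lemma dotpC u v : dotp u v = dotp v u.
Proof. by apply: eq_bigr => i _; rewrite mulrC. Qed.

Lemma dotpDl u v w : dotp (u + v) w = dotp u w + dotp v w.
Proof. by rewrite /dotp -big_split; apply: eq_bigr => i _; rewrite mxE mulrDl. Qed.

Lemma dotpDr u v w : dotp w (u + v) = dotp w u + dotp w v.
Proof. by rewrite dotpC dotpDl !(dotpC w). Qed.

Lemma dotpZl (l : R) u v : dotp (l *: u) v = l * dotp u v.
Proof. by rewrite /dotp mulr_sumr; apply: eq_bigr => i _; rewrite mxE mulrA. Qed.

Lemma dotpZr (l : R) u v : dotp v (l *: u) = l * dotp v u.
Proof. by rewrite dotpC dotpZl dotpC. Qed.

Lemma dotpNl u v : dotp (- u) v = - dotp u v.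
Proof. by rewrite -scaleN1r dotpZl mulN1r. Qed.

Lemma dotpNr u v : dotp v (- u) = - dotp v u.
Proof. by rewrite dotpC dotpNl dotpC. Qed.

Lemma dotpBl u v w : dotp (u - v) w = dotp u w - dotp v w.
Proof. by rewrite dotpDl dotpNl. Qed.

Lemma dotpBr u v w : dotp w (u - v) = dotp w u - dotp w v.
Proof. by rewrite dotpDr dotpNr. Qed.

Lemma dotp0l v : dotp 0 v = 0.
Proof. by rewrite /dotp big1 // => i _; rewrite mxE mul0r. Qed.

Lemma dotp_ge0 u : 0 <= dotp u u.
Proof. by apply: sumr_ge0 => i _; rewrite -expr2 sqr_ge0. Qed.

Lemma dotp_eq0 u : (dotp u u == 0) = (u == 0).
Proof.
apply/idP/eqP => [|->]; last by rewrite dotp0l.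
rewrite psumr_eq0 => [/allP u0|i _]; last by rewrite -expr2 sqr_ge0.
apply/rowP => i; rewrite mxE.
by have := u0 i (mem_index_enum _); rewrite -expr2 sqrf_eq0 => /eqP.
Qed.

Lemma enorm_ge0 u : 0 <= enorm u.
Proof. exact: sqrtr_ge0. Qed.

Lemma enorm_sqr u : enorm u ^+ 2 = dotp u u.
Proof. by rewrite sqr_sqrtr // dotp_ge0. Qed.

Lemma enormZ (l : R) u : enorm (l *: u) = `|l| * enorm u.
Proof.
by rewrite /enorm dotpZl dotpZr mulrA -expr2 sqrtrM ?sqr_ge0 // sqrtr_sqr.
Qed.

Lemma enormN u : enorm (- u) = enorm u.
Proof. by rewrite -scaleN1r enormZ normrN normr1 mul1r. Qed.

Lemma enormB u v : enorm (u - v) = enorm (v - u).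
Proof. by rewrite -enormN opprB. Qed.

Lemma enorm0 : enorm (0 : 'rV[R]_n) = 0.
Proof. by rewrite /enorm dotp0l sqrtr0. Qed.

Lemma dotp_sqr_le u v : dotp u v ^+ 2 <= dotp u u * dotp v v.
Proof.
have [/eqP|u0] := eqVneq (dotp u u) 0.
  by rewrite dotp_eq0 => /eqP ->; rewrite !dotp0l expr0n mul0r.
have uu_gt0 : 0 < dotp u u by rewrite lt_def u0 dotp_ge0.
set t := dotp u v / dotp u u.
have tu : t * dotp u u = dotp u v by rewrite mulfVK.
have := dotp_ge0 (t *: u - v); rewrite !(dotpBl, dotpBr, dotpZl, dotpZr) (dotpC v u) -tu.
by move=> h; rewrite -(ler_pM2l uu_gt0); nra.
Qed.

Lemma dotp_le_enorm u v : dotp u v <= enorm u * enorm v.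
Proof.
apply: le_trans (ler_norm _) _.
rewrite -(ler_pXn2r (_ : (0 < 2)%N)) ?nnegrE ?mulr_ge0 ?enorm_ge0 //.
by rewrite real_normK ?num_real // exprMn !enorm_sqr dotp_sqr_le.
Qed.

Lemma enormD u v : enorm (u + v) <= enorm u + enorm v.
Proof.
rewrite -(ler_pXn2r (_ : (0 < 2)%N)) ?nnegrE ?addr_ge0 ?enorm_ge0 //.
rewrite enorm_sqr dotpDl !dotpDr sqrrD !enorm_sqr (dotpC v u).
have := dotp_le_enorm u v; lra.
Qed.

Lemma enorm_triangle u v w : enorm (u - w) <= enorm (u - v) + enorm (v - w).
Proof.
have -> : u - w = (u - v) + (v - w) by rewrite addrA subrK.
exact: enormD.
Qed.

End Euclidean.

Section Compact.
Variables (R : realType) (Z : topologicalType) (T : set Z).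

Lemma within_continuous_slice (X U : topologicalType) (G : Z * X -> U) x :
  {within T `*` setT, continuous G} -> {within T, continuous (fun t => G (t, x))}.
Proof.
move=> /subspace_continuousP Gc; apply/subspace_continuousP => t Tt.
apply: cvg_trans (Gc (t, x) (conj Tt I)) => B /= [[P Q] [Pt Qx] PQB].
by apply: filterS Pt => s Ps Ts; apply: PQB; split => //=; exact: nbhs_singleton.
Qed.

Lemma compact_continuous_bounded (h : Z -> R) : compact T ->
  {within T, continuous h} -> exists M, forall t, T t -> `|h t| <= M.
Proof.
move=> cT hc; have [->|/set0P T0] := eqVneq T set0; first by exists 0.
have [|c _ cmax] := compact_EVT_max (f := fun t => `|h t|) T0 cT.
  by move=> x; apply: cvg_norm; exact: hc.
by exists `|h c| => t Tt; apply: cmax; rewrite inE.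
Qed.

Lemma compact_continuous_pos_lbound (h : Z -> R) : compact T ->
  {within T, continuous h} -> (forall t, T t -> 0 < h t) ->
  exists2 e, 0 < e & forall t, T t -> e <= h t.
Proof.
move=> cT hc h_gt0; have [->|/set0P T0] := eqVneq T set0; first by exists 1.
have [c Tc cmin] := compact_EVT_min T0 cT hc.
by exists (h c) => [|t Tt]; [apply: h_gt0; move: Tc; rewrite inE | apply: cmin; rewrite inE].
Qed.

End Compact.

Lemma continuous_sum (K : numFieldType) (T : topologicalType) (U : normedModType K)
    (I : Type) (r : seq I) (F : I -> T -> U) :
  (forall i, continuous (F i)) -> continuous (fun x => \sum_(i <- r) F i x).
Proof.
move=> Fc; elim: r => [|i r IH] x.
  by under eq_fun do rewrite big_nil; exact: cst_continuous.
by under eq_fun do rewrite big_cons; apply: continuousD; [exact: Fc | exact: IH].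
Qed.

Lemma mx_coord_continuous (T : topologicalType) a b (i : 'I_a) (j : 'I_b) :
  continuous (fun M : 'M[T]_(a, b) => M i j).
Proof.
move=> M B /= MB; exists (fun i' j' => if (i' == i) && (j' == j) then B else setT).
  by move=> i' j'; case: ifP => [/andP[/eqP -> /eqP ->]//|_]; exact: filterT.
by move=> N /(_ i j); rewrite !eqxx.
Qed.

Lemma continuous_row (T : topologicalType) (K : numFieldType) k (F : T -> 'rV[K]_k) :
  (forall j, continuous (fun t => F t 0 j)) -> continuous F.
Proof.
move=> Fc; have -> : F = fun t => \sum_j F t 0 j *: delta_mx 0 j.
  by apply/funext => t; exact: row_sum_delta.
by apply: continuous_sum => j t; apply: continuousZ; [exact: Fc | exact: cst_continuous].
Qed.

Section SetDist.
Variables (R : realType) (X : Type) (d : X -> X -> R).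
Hypothesis d_ge0 : forall x y, 0 <= d x y.

Lemma set_dist_ge0 x A : 0 <= set_dist d x A.
Proof.
have [->|/set0P [a Aa]] := eqVneq A set0; first by rewrite /set_dist image_set0 inf0.
by apply: lb_le_inf; [exists (d x a), a | move=> _ [y _ <-]].
Qed.

Lemma set_dist_le x A a : A a -> set_dist d x A <= d x a.
Proof. by move=> Aa; apply: ge_inf; [exists 0 => _ [y _ <-] | exists a]. Qed.

End SetDist.

Section SupNorm.
Variables (R : realType) (Z : metricType R) (T : set Z).
Implicit Types b : Z -> R.

Lemma supnormT_ge0 b : 0 <= supnormT T b.
Proof.
rewrite /supnormT; case: (pselect (has_sup [set `|b t| | t in T])) => [hs|/sup_out ->//].
have [[_ [t Tt _]] _] := hs.
by apply: le_trans (normr_ge0 (b t)) _; apply: sup_upper_bound => //; exists t.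
Qed.

Lemma ler_supnormT b t : compact T -> is_CT T b -> T t -> `|b t| <= supnormT T b.
Proof.
move=> cT bc Tt; have [M bM] := compact_continuous_bounded cT bc.
by apply: ub_le_sup; [exists M => _ [s Ts <-]; exact: bM | exists t].
Qed.

Lemma supnormT_le b M : 0 <= M -> (forall t, T t -> `|b t| <= M) -> supnormT T b <= M.
Proof.
move=> M0 bM; have [->|/set0P [t Tt]] := eqVneq T set0.
  by rewrite /supnormT image_set0 sup0.
by apply: ge_sup; [exists `|b t|, t | move=> _ [s Ts <-]; exact: bM].
Qed.

Lemma is_CT_cst (r : R) : is_CT T (fun=> r).
Proof. by move=> x; exact: cvg_cst. Qed.

Lemma is_CTD b b' : is_CT T b -> is_CT T b' -> is_CT T (b \+ b').
Proof. by move=> bc b'c x; apply: cvgD; [exact: bc | exact: b'c]. Qed.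

Lemma is_CTB b b' : is_CT T b -> is_CT T b' -> is_CT T (b \- b').
Proof. by move=> bc b'c x; apply: cvgB; [exact: bc | exact: b'c]. Qed.

Lemma is_CT_max b b' : is_CT T b -> is_CT T b' -> is_CT T (fun t => Num.max (b t) (b' t)).
Proof. by move=> bc b'c x; exact: (@continuous_max _ (subspace T) b b' x (bc x) (b'c x)). Qed.

End SupNorm.

Lemma ler_powRl (R : realType) (q a b : R) : 0 <= q -> 0 <= a -> a <= b -> a `^ q <= b `^ q.
Proof. by move=> q0 a0 ab; apply: ge0_ler_powR; rewrite ?nnegrE // (le_trans a0). Qed.

Lemma le0_of_le_scale (R : realFieldType) (a b : R) :
  (forall s, 0 < s -> s <= 1 -> a <= s * b) -> a <= 0.
Proof.
move=> a_le; rewrite leNgt; apply/negP => a_gt0.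
have ab_gt0 : 0 < a + `|b| by rewrite ltr_pwDl.
set s := a / (a + `|b|).
have s_gt0 : 0 < s by rewrite divr_gt0.
have s_le1 : s <= 1 by rewrite ler_pdivrMr // mul1r lerDl.
have sab : s * (a + `|b|) = a by rewrite mulfVK ?gt_eqF.
have := a_le s s_gt0 s_le1; have := ler_wpM2l (ltW s_gt0) (ler_norm b); nra.
Qed.

Definition error_bound (R : realType) n (h : 'rV[R]_n -> R) (q : R) (xbar : 'rV[R]_n) :=
  exists tau : R, 0 < tau /\ exists delta : R, 0 < delta /\
    forall x, enorm (x - xbar) < delta ->
      tau * set_dist (@eucl_dist R n) x [set y | h y <= 0] <= powR (Num.max (h x) 0) q.

Section CalmErrorBound.
Variables (R : realType) (n : nat) (Y : Type) (Ydom : set Y) (dY : Y -> Y -> R).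
Variables (S : Y -> set 'rV[R]_n) (q : R) (ybar : Y) (xbar : 'rV[R]_n) (h : 'rV[R]_n -> R).
Hypotheses (q_gt0 : 0 < q) (S_ybar : S ybar = [set y | h y <= 0]).

Let max_ge0 x : 0 <= Num.max (h x) 0.
Proof. by rewrite le_max lexx orbT. Qed.

Lemma q_calm_of_error_bound K rho del : 0 < K -> 0 < rho -> 0 < del ->
  (forall y, Ydom y -> dY y ybar < del -> forall x, S y x -> enorm (x - xbar) < rho ->
     Num.max (h x) 0 <= K * dY y ybar) ->
  error_bound h q xbar -> q_calm Ydom dY (@eucl_dist R n) S q ybar xbar.
Proof.
move=> K0 rho0 del0 residual [tau [tau0 [eps [eps0 eb]]]].
exists (tau / K `^ q); split; first by rewrite divr_gt0 ?powR_gt0.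
exists (Num.min rho eps); split; first by rewrite lt_min rho0 eps0.
exists del; split => // y Yy yd x Syx; rewrite lt_min => /andP[xrho xeps].
have hx_le := residual y Yy yd x Syx xrho.
have dY0 : 0 <= dY y ybar by rewrite -(pmulr_rge0 _ K0) (le_trans (max_ge0 x)).
rewrite S_ybar mulrAC ler_pdivrMr ?powR_gt0 // [X in _ <= X]mulrC -(powRM _ (ltW K0) dY0).
exact: le_trans (eb x xeps) (ler_powRl (ltW q_gt0) (max_ge0 x) hx_le).
Qed.

Lemma error_bound_of_q_calm K : 0 < K -> S ybar xbar -> (forall y, 0 <= dY y ybar) ->
  (forall x, exists y, [/\ Ydom y, S y x & dY y ybar <= K * Num.max (h x) 0]) ->
  q_calm Ydom dY (@eucl_dist R n) S q ybar xbar -> error_bound h q xbar.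
Proof.
move=> K0 Sxbar dY0 perturb [tau [tau0 [eps [eps0 [del [del0 calm]]]]]].
have dK0 : 0 < del / K by rewrite divr_gt0.
(* tau1 serves residuals with K r < del, where calmness applies; tau2 serves the
   others, for which dist x (S ybar) <= |x - xbar| < eps suffices. *)
set tau1 := tau / K `^ q; set tau2 := (del / K) `^ q / eps.
exists (Num.min tau1 tau2); split; first by rewrite lt_min !divr_gt0 ?powR_gt0.
exists eps; split => // x xeps; rewrite -S_ybar.
set r := Num.max (h x) 0; set dx := set_dist _ x (S ybar).
have r0 : 0 <= r := max_ge0 x.
have dx0 : 0 <= dx by apply: set_dist_ge0 => *; exact: enorm_ge0.
have [Kr_lt|Kr_ge] := ltP (K * r) del.
  have [y [Yy Syx yr]] := perturb x.
  have calm_x := calm y Yy (le_lt_trans yr Kr_lt) x Syx xeps.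
  apply: le_trans (ler_wpM2r dx0 (_ : _ <= tau1)) _; first by rewrite ge_min lexx.
  rewrite mulrAC ler_pdivrMr ?powR_gt0 // [X in _ <= X]mulrC -(powRM _ (ltW K0) r0).
  exact: le_trans calm_x (ler_powRl (ltW q_gt0) (dY0 y) yr).
apply: le_trans (ler_wpM2r dx0 (_ : _ <= tau2)) _; first by rewrite ge_min lexx orbT.
have dx_eps : dx <= eps.
  by apply: le_trans (ltW xeps); apply: set_dist_le => // *; exact: enorm_ge0.
apply: le_trans (ler_wpM2l _ dx_eps) _; first by rewrite divr_ge0 ?powR_ge0 ?ltW.
rewrite mulfVK ?gt_eqF //; apply: ler_powRl (ltW q_gt0) (ltW dK0) _.
by rewrite ler_pdivrMr // mulrC.
Qed.

End CalmErrorBound.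

Section SupFun.
Variables (R : realType) (n : nat) (Z : metricType R) (T : set Z).
Variables (f : 'rV[R]_n -> R) (g : Z -> 'rV[R]_n -> R).
Variables (cbar : 'rV[R]_n) (bbar : Z -> R) (xbar : 'rV[R]_n).
Hypotheses (cT : compact T)
  (gc : {within T `*` setT, continuous (fun p : Z * 'rV[R]_n => g p.1 p.2)})
  (bbar_c : is_CT T bbar).

Local Notation fbar := (supfun T f g cbar bbar xbar).

Lemma is_CT_constraint x : is_CT T (fun t => g t x).
Proof. exact: within_continuous_slice gc. Qed.

Let supfun_ubound x : has_ubound
  ([set f x - f xbar + dotp cbar (x - xbar)] `|` [set g t x - bbar t | t in T]).
Proof.
have [M gM] := compact_continuous_bounded cT (is_CTB (is_CT_constraint (x := x)) bbar_c).
exists (Num.max (f x - f xbar + dotp cbar (x - xbar)) M) => _ [->|[t Tt <-]].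
  by rewrite le_max lexx.
by rewrite le_max (le_trans (ler_norm _) (gM t Tt)) orbT.
Qed.

Lemma supfun_ge_obj x : f x - f xbar + dotp cbar (x - xbar) <= fbar x.
Proof. by apply: ub_le_sup; [exact: supfun_ubound | left]. Qed.

Lemma supfun_ge_cons x t : T t -> g t x - bbar t <= fbar x.
Proof. by move=> Tt; apply: ub_le_sup; [exact: supfun_ubound | right; exists t]. Qed.

Lemma supfun_le x M : f x - f xbar + dotp cbar (x - xbar) <= M ->
  (forall t, T t -> g t x - bbar t <= M) -> fbar x <= M.
Proof.
move=> objM consM; apply: ge_sup; first by exists (f x - f xbar + dotp cbar (x - xbar)); left.
by move=> _ [->|[t Tt <-]] //; exact: consM.
Qed.

Lemma supfun_le_levelmap x r : fbar x <= r <->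
  levelmap T f g cbar (f xbar + dotp cbar xbar + r, fun t => bbar t + r) x.
Proof.
split=> [xr|[/= obj cons]].
  split=> /= [|t Tt]; last by have := le_trans (supfun_ge_cons x Tt) xr; lra.
  by have := le_trans (supfun_ge_obj x) xr; rewrite dotpBr; lra.
apply: supfun_le => [|t Tt]; first by move: obj; rewrite dotpBr; lra.
by have := cons t Tt; lra.
Qed.

Lemma levelmap_supfun :
  levelmap T f g cbar (f xbar + dotp cbar xbar, bbar) = [set y | fbar y <= 0].
Proof.
rewrite predeqE => y; have := supfun_le_levelmap y 0.
rewrite addr0 (_ : (fun t => _) = bbar); last by apply/funext => t; rewrite addr0.
exact: iff_sym.
Qed.

Lemma optsol_supfun : optsol T f g cbar bbar xbar ->
  optsol T f g cbar bbar = [set y | fbar y <= 0].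
Proof.
move=> [Fxbar Oxbar]; rewrite predeqE => y; split=> [[Fy Oy]|yle0].
  apply: supfun_le => [|t Tt]; last by rewrite subr_le0; exact: Fy.
  by have := Oy _ Fxbar; rewrite dotpBr; lra.
have Fy : feas T g bbar y.
  by move=> t Tt; have := le_trans (supfun_ge_cons y Tt) yle0; rewrite subr_le0.
split=> // z Fz; have := le_trans (supfun_ge_obj y) yle0.
by have := Oxbar _ Fz; rewrite dotpBr; lra.
Qed.

End SupFun.

Section ConvexPerturbation.
Variables (R : realType) (n : nat) (Z : metricType R) (T : set Z).
Variables (f : 'rV[R]_n -> R) (g : Z -> 'rV[R]_n -> R).
Variables (cbar : 'rV[R]_n) (bbar : Z -> R) (xbar : 'rV[R]_n).

Lemma feas_slater_comb (mu eps : R) (xh : 'rV[R]_n) (b : Z -> R) :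
  (forall t, T t -> convex_fun (g t)) -> 0 <= mu <= 1 ->
  (forall t, T t -> g t xh <= bbar t - eps) -> feas T g bbar xbar ->
  (forall t, T t -> bbar t - b t <= mu * eps) ->
  feas T g b (mu *: xh + (1 - mu) *: xbar).
Proof.
move=> gconv /andP[mu0 mu1] xh_eps Fxbar b_ge t Tt.
have mu1' : 0 <= 1 - mu by rewrite subr_ge0.
apply: le_trans (gconv t Tt xh xbar mu mu0 mu1) _.
have := ler_wpM2l mu0 (xh_eps t Tt); have := ler_wpM2l mu1' (Fxbar t Tt).
have := b_ge t Tt; lra.
Qed.

Lemma optsol_obj_residual_le (c : 'rV[R]_n) (b : Z -> R) x y :
  optsol T f g c b x -> feas T g b y ->
  f x - f xbar + dotp cbar (x - xbar)
    <= f y - f xbar + dotp cbar (y - xbar) + enorm (c - cbar) * enorm (y - x).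
Proof.
move=> [_ Ox] Fy; have := Ox y Fy; have := dotp_le_enorm (c - cbar) (y - x).
rewrite !(dotpBl, dotpBr); lra.
Qed.

End ConvexPerturbation.

Section GeneralCase.
Variables (R : realType) (n : nat) (Z : metricType R) (T : set Z).
Variables (f : 'rV[R]_n -> R) (g : Z -> 'rV[R]_n -> R) (q : R).
Variables (cbar : 'rV[R]_n) (bbar : Z -> R) (xbar : 'rV[R]_n).
Hypotheses (cT : compact T)
  (gc : {within T `*` setT, continuous (fun p : Z * 'rV[R]_n => g p.1 p.2)})
  (bbar_c : is_CT T bbar) (xbar_opt : optsol T f g cbar bbar xbar) (q_gt0 : 0 < q).

Local Notation fbar := (supfun T f g cbar bbar xbar).
Local Notation abar := (f xbar + dotp cbar xbar).
Local Notation dCB := (fun cb cb' : 'rV[R]_n * (Z -> R) =>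
  Num.max (enorm (cb.1 - cb'.1)) (supnormT T (cb.2 \- cb'.2))).
Local Notation dB := (fun b b' : Z -> R => supnormT T (b \- b')).
Local Notation dAB := (fun ab ab' : R * (Z -> R) =>
  Num.max (`|ab.1 - ab'.1| : R) (supnormT T (ab.2 \- ab'.2))).

Lemma levelmap_calm_of_error_bound : error_bound fbar q xbar ->
  q_calm (fun ab => is_CT T ab.2) dAB (@eucl_dist R n) (levelmap T f g cbar) q
    (abar, bbar) xbar.
Proof.
apply: (q_calm_of_error_bound q_gt0 (levelmap_supfun f cbar xbar cT gc bbar_c)
  (K := 1) (rho := 1) (del := 1)) => //.
move=> [a b] /= b_c _ x [/= obj cons] _; rewrite mul1r; set D := Num.max `|a - abar| _.
have Da : `|a - abar| <= D by rewrite le_max lexx.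
have Db : supnormT T (b \- bbar) <= D by rewrite le_max lexx orbT.
rewrite ge_max (le_trans (normr_ge0 _) Da) andbT; apply: supfun_le => //.
  by apply: le_trans Da; apply: le_trans (ler_norm _); move: obj; rewrite dotpBr; lra.
move=> t Tt; apply: le_trans Db; apply: le_trans (ler_supnormT cT (is_CTB b_c bbar_c) Tt).
by apply: le_trans (ler_norm _); have := cons t Tt; rewrite /=; lra.
Qed.

Lemma error_bound_of_levelmap_calm :
  q_calm (fun ab => is_CT T ab.2) dAB (@eucl_dist R n) (levelmap T f g cbar) q
    (abar, bbar) xbar -> error_bound fbar q xbar.
Proof.
apply: (error_bound_of_q_calm q_gt0 (levelmap_supfun f cbar xbar cT gc bbar_c) (K := 1)) => //.
- by split=> //=; case: xbar_opt.
- by move=> ab; rewrite le_max normr_ge0.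
move=> x; set r := Num.max (fbar x) 0.
have r0 : 0 <= r by rewrite le_max lexx orbT.
exists (abar + r, bbar \+ cst r); split => /=.
- by apply: is_CTD => //; exact: is_CT_cst.
- by apply/supfun_le_levelmap => //; rewrite le_max lexx.
rewrite mul1r addrAC subrr add0r ger0_norm // ge_max lexx /=.
by apply: supnormT_le => // t _ /=; rewrite addrAC subrr add0r ger0_norm.
Qed.

Lemma optsol_rhs_calm :
  q_calm (fun cb => is_CT T cb.2) dCB (@eucl_dist R n)
    (fun cb => optsol T f g cb.1 cb.2) q (cbar, bbar) xbar ->
  q_calm (is_CT T) dB (@eucl_dist R n) (fun b => optsol T f g cbar b) q bbar xbar.
Proof.
move=> [tau [tau0 [eps [eps0 [del [del0 calm]]]]]].
exists tau; split => //; exists eps; split => //; exists del; split => //.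
move=> b b_c bd x Sx xeps; have := calm (cbar, b) b_c.
by rewrite /= subrr enorm0 max_r ?supnormT_ge0 //; apply.
Qed.

Hypotheses (fconv : convex_fun f) (gconv : forall t, T t -> convex_fun (g t))
  (slater_bbar : slater T g bbar).

Lemma optsol_supfun_residual : exists K del : R, [/\ 0 < K, 0 < del &
  forall c b, is_CT T b -> dCB (c, b) (cbar, bbar) < del ->
  forall x, optsol T f g c b x -> enorm (x - xbar) < 1 ->
    Num.max (fbar x) 0 <= K * dCB (c, b) (cbar, bbar)].
Proof.
have [xh xh_slater] := slater_bbar; have [Fxbar _] := xbar_opt.
have [eps eps0 eps_le] : exists2 eps, 0 < eps & forall t, T t -> eps <= bbar t - g t xh.
  apply: compact_continuous_pos_lbound => //.
    by apply: is_CTB => //; exact: is_CT_constraint.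
  by move=> t Tt; rewrite subr_gt0; exact: xh_slater.
set A := Num.max 0 (f xh - f xbar + dotp cbar (xh - xbar)).
have A0 : 0 <= A by rewrite le_max lexx.
set K := A / eps + enorm (xh - xbar) + 1.
have K1 : 1 <= K by rewrite /K lerDr addr_ge0 ?enorm_ge0 ?divr_ge0 ?(ltW eps0).
exists K, eps; split => //; first exact: lt_le_trans ltr01 K1.
move=> c b b_c /= Deps x x_opt x1; set D := Num.max (enorm _) _ in Deps *.
have Dc : enorm (c - cbar) <= D by rewrite le_max lexx.
have D0 : 0 <= D by rewrite (le_trans (enorm_ge0 _) Dc).
have bD t : T t -> `|b t - bbar t| <= D.
  move=> Tt; apply: le_trans (ler_supnormT cT (is_CTB b_c bbar_c) Tt) _.
  by rewrite le_max lexx orbT.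
set mu := D / eps; set y := mu *: xh + (1 - mu) *: xbar.
have mu01 : 0 <= mu <= 1 by rewrite /mu divr_ge0 ?(ltW eps0) //= ler_pdivrMr // mul1r ltW.
have /andP[mu0 mu1] := mu01.
have mu_eps : mu * eps = D by rewrite mulfVK ?gt_eqF.
have Fy : feas T g b y.
  apply: (feas_slater_comb (bbar := bbar) (eps := eps)) => // [t Tt|t Tt].
    by have := eps_le t Tt; lra.
  by rewrite mu_eps; have := bD t Tt; rewrite distrC => /(le_trans (ler_norm _)).
have y_xbar : y - xbar = mu *: (xh - xbar) by apply/rowP => i; rewrite !mxE; ring.
have obj_y : f y - f xbar + dotp cbar (y - xbar) <= mu * A.
  have objA : f xh - f xbar + dotp cbar (xh - xbar) <= A by rewrite le_max lexx orbT.
  have := fconv xh xbar mu0 mu1; have := ler_wpM2l mu0 objA.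
  rewrite y_xbar dotpZr; lra.
have yx : enorm (y - x) <= enorm (xh - xbar) + 1.
  apply: le_trans (enorm_triangle _ xbar _) _; rewrite y_xbar enormZ (enormB xbar x).
  by apply: lerD (ltW x1); rewrite ger0_norm // ler_piMl ?enorm_ge0.
rewrite ge_max mulr_ge0 ?(le_trans ler01 K1) // andbT; apply: supfun_le => [|t Tt].
  have := optsol_obj_residual_le cbar xbar x_opt Fy.
  have := ler_wpM2r (enorm_ge0 (y - x)) Dc; have := ler_wpM2l D0 yx.
  have -> : K * D = mu * A + D * (enorm (xh - xbar) + 1).
    by rewrite /K /mu; field; rewrite gt_eqF.
  lra.
have := x_opt.1 t Tt; have := bD t Tt; have := ler_norm (b t - bbar t).
have := ler_wpM2r D0 K1; lra.
Qed.

Lemma optsol_calm_of_error_bound : error_bound fbar q xbar ->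
  q_calm (fun cb => is_CT T cb.2) dCB (@eucl_dist R n)
    (fun cb => optsol T f g cb.1 cb.2) q (cbar, bbar) xbar.
Proof.
have [K [del [K0 del0 residual]]] := optsol_supfun_residual.
apply: (q_calm_of_error_bound (ybar := (cbar, bbar)) q_gt0
  (optsol_supfun cT gc bbar_c xbar_opt) (K := K) (rho := 1) (del := del)) => // -[c b] /= b_c.
exact: residual.
Qed.

End GeneralCase.

Section ConicCombination.
Variables (R : realType) (m : nat).
Local Notation V := 'rV[R]_m.
Local Notation sqdist z v := (dotp (z - v) (z - v)).

Definition lincomb N (lam : 'I_N -> R) (ws : 'I_N -> V) : V := \sum_(i < N) lam i *: ws i.

Lemma dotp_lincomb N (lam : 'I_N -> R) ws u :
  dotp (lincomb lam ws) u = \sum_(i < N) lam i * dotp (ws i) u.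
Proof.
rewrite /dotp /lincomb; under eq_bigr do rewrite summxE mulr_suml.
rewrite exchange_big; apply: eq_bigr => i _; rewrite mulr_sumr.
by apply: eq_bigr => k _; rewrite mxE mulrA.
Qed.

Lemma lincomb_coord N (lam : 'I_N -> R) (ws : 'I_N -> V) j :
  lincomb lam ws 0 j = \sum_(i < N) lam i * ws i 0 j.
Proof. by rewrite summxE; apply: eq_bigr => i _; rewrite mxE. Qed.

Lemma lincomb_kernel (ws : 'I_m.+1 -> V) :
  exists2 al : 'I_m.+1 -> R, (exists i, 0 < al i) & lincomb al ws = 0.
Proof.
pose M : 'M[R]_(m.+1, m) := \matrix_(i, k) ws i 0 k.
have /rowV0Pn [a /sub_kermxP aM a0] : kermx M != 0.
  by rewrite -mxrank_eq0 mxrank_ker subn_eq0 -ltnNge ltnS rank_leq_col.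
have [i ai] : exists i, a 0 i != 0.
  apply/existsP; apply: contraNT a0 => /existsPn a_eq0.
  by apply/eqP/rowP => i; rewrite mxE; apply/eqP; rewrite -[_ == _]negbK a_eq0.
have comb0 : lincomb (fun i => a 0 i) ws = 0.
  apply/rowP => k; have /rowP/(_ k) := aM; rewrite mxE [RHS]mxE => aMk.
  by rewrite summxE [RHS]mxE -[in RHS]aMk; apply: eq_bigr => j _; rewrite !mxE.
have [ai_gt0|ai_le0] := ltP 0 (a 0 i); first by exists (fun i => a 0 i) => //; exists i.
exists (fun i => - a 0 i); first by exists i; rewrite oppr_gt0 lt_neqAle ai ai_le0.
rewrite /lincomb in comb0 *; under eq_bigr do rewrite scaleNr.
by rewrite sumrN comb0 oppr0.
Qed.

Lemma caratheodory_step (lam : 'I_m.+1 -> R) (ws : 'I_m.+1 -> V) :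
  (forall i, 0 <= lam i) ->
  exists (j : 'I_m.+1) (lam' : 'I_m -> R), (forall i, 0 <= lam' i) /\
    lincomb lam' (fun i => ws (lift j i)) = lincomb lam ws.
Proof.
move=> lam_ge0; have [al [i0 al_i0] al_ker] := lincomb_kernel ws.
have [j al_j j_min] := @arg_minP _ _ _ i0 (fun i => 0 < al i) (fun i => lam i / al i) al_i0.
set th := lam j / al j.
have th_ge0 : 0 <= th by rewrite divr_ge0 // ltW.
pose lam2 i := lam i - th * al i.
have lam2_ge0 i : 0 <= lam2 i.
  rewrite subr_ge0; have [al_i|al_i] := ltP 0 (al i).
    by rewrite -ler_pdivlMr //; exact: j_min.
  by apply: le_trans (lam_ge0 i); exact: mulr_ge0_le0.
have lam2_j : lam2 j = 0 by rewrite /lam2 /th mulfVK ?subrr // gt_eqF.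
have -> : lincomb lam ws = lincomb lam2 ws.
  rewrite /lincomb /lam2; under [RHS]eq_bigr do rewrite scalerBl -scalerA.
  by rewrite sumrB -scaler_sumr -/(lincomb al ws) al_ker scaler0 subr0.
exists j, (fun i => lam2 (lift j i)); split => [i|]; first exact: lam2_ge0.
by rewrite [RHS](bigD1_ord j) //= lam2_j scale0r add0r.
Qed.

Lemma nearest_point_dotp_le0 (z y u : V) :
  (forall s, 0 < s -> s <= 1 -> sqdist z y <= sqdist z (y + s *: u)) ->
  dotp u (z - y) <= 0.
Proof.
move=> near; apply: (le0_of_le_scale (b := dotp u u / 2)) => s s_gt0 s_le1.
have := near s s_gt0 s_le1; rewrite opprD addrA.
rewrite !(dotpBl, dotpBr, dotpZl, dotpZr) (dotpC z u) (dotpC y u) => h.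
rewrite -(ler_pM2l s_gt0); lra.
Qed.

Lemma lincomb_nearest_bounded (W : set V) (z : V) N (L : R) :
  compact W -> W !=set0 -> 0 <= L ->
  exists (lam : 'I_N -> R) (ws : 'I_N -> V),
    (forall i, 0 <= lam i <= L /\ W (ws i)) /\
    forall (lam' : 'I_N -> R) (ws' : 'I_N -> V),
      (forall i, 0 <= lam' i <= L /\ W (ws' i)) ->
      sqdist z (lincomb lam ws) <= sqdist z (lincomb lam' ws').
Proof.
move=> cW [w0 Ww0] L0.
pose P := [set v : 'rV[V]_N | forall i, W (v 0 i)]
  `*` [set l : 'rV[R]_N | forall i, `[0, L]%classic (l 0 i)].
pose comb (p : 'rV[V]_N * 'rV[R]_N) := lincomb (fun i => p.2 0 i) (fun i => p.1 0 i).
pose phi p := sqdist z (comb p).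
have cP : compact P.
  apply: compact_setX; first exact: (rV_compact (A := fun=> W)).
  by apply: (rV_compact (A := fun=> `[0, L]%classic)) => i; exact: segment_compact.
have P0 : P !=set0.
  by exists (const_mx w0, 0); split => i /=; rewrite mxE // in_itv /= lexx L0.
have phi_c : continuous phi.
  have coord1 i : continuous (fun p : 'rV[V]_N * 'rV[R]_N => p.1 0 i).
    move=> p; apply: (continuous_comp (f := fst) (g := fun M : 'rV[V]_N => M 0 i)).
      exact: cvg_fst.
    exact: mx_coord_continuous.
  have coord2 i : continuous (fun p : 'rV[V]_N * 'rV[R]_N => p.2 0 i).
    move=> p; apply: (continuous_comp (f := snd) (g := fun M : 'rV[R]_N => M 0 i)).
      exact: cvg_snd.
    exact: coord_continuous.
  have comb_c : continuous comb.
    by apply: continuous_sum => i p; apply: continuousZ; [exact: coord2 | exact: coord1].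
  have sq_c : continuous (fun v : V => dotp v v).
    by apply: continuous_sum => k v; apply: continuousM; exact: coord_continuous.
  move=> p; apply: (continuous_comp (f := fun p => z - comb p)) (sq_c _).
  by apply: continuousB; [exact: cst_continuous | exact: comb_c].
have [p /[!inE] -[Pp1 Pp2] pmin] := compact_EVT_min P0 cP (continuous_subspaceT phi_c).
exists (fun i => p.2 0 i), (fun i => p.1 0 i); split => [i|lam' ws' h].
  by have := Pp2 i; rewrite /= in_itv.
have /pmin : (\row_i ws' i, \row_i lam' i) \in P.
  by rewrite inE; split => i /=; rewrite mxE; case: (h i) => //; rewrite in_itv.
rewrite /phi /comb /lincomb /=; under [in X in _ <= X -> _]eq_bigr do rewrite !mxE.
by [].
Qed.

Lemma lincomb_far (W : set V) (e z : V) (eps : R) N (lam : 'I_N -> R) ws k :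
  0 < eps -> (forall w, W w -> dotp w e <= - eps) ->
  (forall i, 0 <= lam i /\ W (ws i)) -> (2 * enorm z + 1) * enorm e < eps * lam k ->
  dotp z z <= sqdist z (lincomb lam ws).
Proof.
move=> eps_gt0 We lamW big_k; set y := lincomb lam ws.
have ye : dotp y e <= - (eps * lam k).
  rewrite /y dotp_lincomb (bigD1 k) //=; have [lam_k Wk] := lamW k.
  have := ler_wpM2l lam_k (We _ Wk).
  suff : \sum_(i < N | i != k) lam i * dotp (ws i) e <= 0 by lra.
  apply: sumr_le0 => i _; have [lam_i Wi] := lamW i.
  by apply: mulr_ge0_le0 => //; apply: le_trans (We _ Wi) _; rewrite oppr_le0 ltW.
have y_big : 2 * enorm z + 1 < enorm y.
  rewrite ltNge; apply/negP => y_small.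
  have := dotp_le_enorm y (- e); rewrite dotpNr enormN.
  have := ler_wpM2r (enorm_ge0 e) y_small; lra.
have := dotp_le_enorm z y; have := enorm_ge0 z.
rewrite dotpBl !dotpBr (dotpC y z) -!enorm_sqr; nra.
Qed.

Lemma scale_lincomb N c (lam : 'I_N -> R) ws :
  c *: lincomb lam ws = lincomb (fun i => c * lam i) ws.
Proof. by rewrite /lincomb scaler_sumr; apply: eq_bigr => i _; rewrite scalerA. Qed.

Lemma cone_nearest_point (W : set V) (e z : V) (eps : R) :
  compact W -> W !=set0 -> 0 < eps -> (forall w, W w -> dotp w e <= - eps) ->
  exists (lam : 'I_m -> R) (ws : 'I_m -> V), [/\ forall i, 0 <= lam i /\ W (ws i),
    forall (lam' : 'I_m -> R) ws', (forall i, 0 <= lam' i /\ W (ws' i)) ->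
      sqdist z (lincomb lam ws) <= sqdist z (lincomb lam' ws') &
    forall (lam' : 'I_m.+1 -> R) ws', (forall i, 0 <= lam' i /\ W (ws' i)) ->
      sqdist z (lincomb lam ws) <= sqdist z (lincomb lam' ws')].
Proof.
move=> cW W0 eps_gt0 We; have [w0 Ww0] := W0.
(* A combination with a coefficient above L is farther from z than 0 is. *)
set L := (2 * enorm z + 1) * enorm e / eps.
have L0 : 0 <= L.
  rewrite /L divr_ge0 ?(ltW eps_gt0) // mulr_ge0 ?enorm_ge0 //.
  by rewrite addr_ge0 // mulr_ge0 // enorm_ge0.
have [lam [ws [lamW ymin]]] := lincomb_nearest_bounded z m cW W0 L0.
have y_min (lam' : 'I_m -> R) ws' : (forall i, 0 <= lam' i /\ W (ws' i)) ->
    sqdist z (lincomb lam ws) <= sqdist z (lincomb lam' ws').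
  move=> lamW'; case: (pselect (exists k, L < lam' k)) => [[k Lk]|small]; last first.
    apply: ymin => i; have [lam'_i Wi] := lamW' i; split => //.
    by rewrite lam'_i leNgt; apply/negP => Li; apply: small; exists i.
  have big_k : (2 * enorm z + 1) * enorm e < eps * lam' k by rewrite -ltr_pdivrMl // mulrC.
  apply: le_trans (lincomb_far eps_gt0 We lamW' big_k).
  have comb0 : lincomb (fun _ : 'I_m => 0) (fun=> w0) = 0.
    by rewrite /lincomb big1 // => i _; rewrite scale0r.
  by have := ymin (fun=> 0) (fun=> w0); rewrite comb0 subr0; apply=> i; rewrite lexx L0.
exists lam, ws; split => // [i|lam' ws' lamW'].
  by have [/andP[]] := lamW i.
have [j [lam'' [lam''_ge0 <-]]] := caratheodory_step ws' (fun i => (lamW' i).1).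
by apply: y_min => i; split => //; exact: (lamW' _).2.
Qed.

Lemma compact_cone_alternative (W : set V) (e z : V) (eps : R) :
  compact W -> W !=set0 -> 0 < eps -> (forall w, W w -> dotp w e <= - eps) ->
  (exists d, (forall w, W w -> dotp w d <= 0) /\ 0 < dotp z d) \/
  (exists (lam : 'I_m -> R) (ws : 'I_m -> V),
     (forall i, 0 <= lam i /\ W (ws i)) /\ z = lincomb lam ws).
Proof.
move=> cW W0 eps_gt0 We.
have [lam [ws [lamW y_min y_min1]]] := cone_nearest_point z cW W0 eps_gt0 We.
set y := lincomb lam ws in y_min y_min1 *; set d := z - y.
have Wd w : W w -> dotp w d <= 0.
  move=> Ww; apply: nearest_point_dotp_le0 => s s_gt0 _.
  pose lam2 (i : 'I_m.+1) := if unlift ord_max i is Some j then lam j else s.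
  pose ws2 (i : 'I_m.+1) := if unlift ord_max i is Some j then ws j else w.
  have -> : y + s *: w = lincomb lam2 ws2.
    rewrite /lincomb (bigD1_ord ord_max) //= /lam2 /ws2 unlift_none addrC.
    by congr (_ + _); apply: eq_bigr => i _; rewrite liftK.
  apply: y_min1 => i; rewrite /lam2 /ws2; case: unlift => [j|]; last by rewrite ltW.
  exact: lamW.
have y_scale c : 0 <= c -> sqdist z y <= sqdist z (c *: y).
  move=> c0; rewrite /y scale_lincomb; apply: y_min => i.
  by have [lam_i Wi] := lamW i; rewrite mulr_ge0.
have yd : dotp y d = 0.
  apply/eqP; rewrite eq_le; apply/andP; split.
    apply: nearest_point_dotp_le0 => s s_gt0 _.
    have -> : y + s *: y = (1 + s) *: y by rewrite scalerDl scale1r.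
    by apply: y_scale; rewrite addr_ge0 // ltW.
  rewrite -oppr_le0 -dotpNl; apply: nearest_point_dotp_le0 => s _ s_le1.
  have -> : y + s *: - y = (1 - s) *: y by rewrite scalerN scalerBl scale1r.
  by apply: y_scale; rewrite subr_ge0.
have [d0|dn0] := eqVneq d 0.
  by right; exists lam, ws; split => //; apply/eqP; rewrite -subr_eq0 -/d d0.
left; exists d; split => //.
have -> : z = y + d by rewrite /d addrC subrK.
by rewrite dotpDl yd add0r lt_def dotp_eq0 dn0 dotp_ge0.
Qed.

End ConicCombination.

Section RowCons.
Variable R : realType.

Definition grad n (h : 'rV[R]_n -> R) : 'rV[R]_n := \row_i h (delta_mx 0 i).

Lemma linear_dotp_grad n (h : 'rV[R]_n -> R) x : linear_fun h -> h x = dotp (grad h) x.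
Proof.
move=> [hD hZ]; have h0 : h 0 = 0 by rewrite -(scale0r 0) hZ mul0r.
rewrite {1}(row_sum_delta x) (big_morph h hD h0) /dotp.
by apply: eq_bigr => i _; rewrite hZ mxE mulrC.
Qed.

Definition row_cons n (c : R) (v : 'rV[R]_n) : 'rV[R]_n.+1 :=
  \row_j (if unlift ord0 j is Some k then v 0 k else c).

Lemma row_cons0 n c (v : 'rV[R]_n) : row_cons c v 0 ord0 = c.
Proof. by rewrite mxE unlift_none. Qed.

Lemma row_consS n c (v : 'rV[R]_n) k : row_cons c v 0 (lift ord0 k) = v 0 k.
Proof. by rewrite mxE liftK. Qed.

Lemma dotp_row_cons n c (v : 'rV[R]_n) d :
  dotp (row_cons c v) d = c * d 0 ord0 + dotp v (\row_k d 0 (lift ord0 k)).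
Proof.
rewrite /dotp (bigD1_ord ord0) //= row_cons0; congr (_ + _).
by apply: eq_bigr => k _; rewrite row_consS mxE.
Qed.

End RowCons.

Section LinearKKT.
Variables (R : realType) (n : nat) (Z : metricType R) (T : set Z).
Variables (f : 'rV[R]_n -> R) (g : Z -> 'rV[R]_n -> R).
Variables (cbar : 'rV[R]_n) (bbar : Z -> R) (xbar : 'rV[R]_n).
Hypotheses (cT : compact T)
  (gc : {within T `*` setT, continuous (fun p : Z * 'rV[R]_n => g p.1 p.2)})
  (bbar_c : is_CT T bbar) (slater_bbar : slater T g bbar)
  (flin : linear_fun f) (glin : forall t, T t -> linear_fun (g t))
  (xbar_opt : optsol T f g cbar bbar xbar).

Lemma linear_no_descent (sg : R) (d : 'rV[R]_n) :
  (forall t, T t -> (bbar t - g t xbar) * sg + g t d <= 0) -> 0 <= f d + dotp cbar d.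
Proof.
move=> descent; have [Fxbar Oxbar] := xbar_opt.
set s := (`|sg| + 1)^-1.
have s_gt0 : 0 < s by rewrite invr_gt0 ltr_wpDl.
have s_sg : s * `|sg| <= 1 by rewrite ler_pdivrMl ?ltr_wpDl // mulr1 lerDl.
have F : feas T g bbar (xbar + s *: d).
  move=> t Tt; have [gD gZ] := glin Tt; rewrite gD gZ.
  have slack : 0 <= bbar t - g t xbar by rewrite subr_ge0; exact: Fxbar.
  have gd : g t d <= (bbar t - g t xbar) * `|sg|.
    have nsg : - sg <= `|sg| by rewrite -normrN ler_norm.
    have := ler_wpM2l slack nsg; have := descent t Tt; lra.
  have := ler_wpM2l (ltW s_gt0) gd; have := ler_piMr slack s_sg.
  rewrite mulrCA; lra.
have := Oxbar _ F; have [fD fZ] := flin; rewrite fD fZ dotpDr dotpZr => obj.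
by rewrite -(pmulr_rge0 _ s_gt0); lra.
Qed.

Lemma linear_obj_grad y : f y + dotp cbar y = dotp (grad f + cbar) y.
Proof. by rewrite dotpDl -linear_dotp_grad. Qed.

Lemma linear_obj_eq0 : T = set0 -> forall y, f y + dotp cbar y = 0.
Proof.
move=> T0 y.
have descent d : 0 <= f d + dotp cbar d by apply: (linear_no_descent (sg := 0)); rewrite T0.
by have := descent y; have := descent (- y); rewrite !linear_obj_grad dotpNr; lra.
Qed.

(* Thanks to the slack coordinate, writing [row_cons 0 (- grad f - cbar)] as a
   conic combination of these vectors gives sum_i lam_i (bbar - g xbar)(t_i) = 0,
   a sum of nonnegative terms: complementary slackness. *)
Let slack_grad t := row_cons (bbar t - g t xbar) (grad (g t)).

Lemma compact_slack_grad : compact (slack_grad @` T).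
Proof.
apply: continuous_compact => //; apply: continuous_row => j.
case: (unliftP ord0 j) => [k ->|->].
  under eq_fun do rewrite row_consS mxE; exact: is_CT_constraint.
under eq_fun do rewrite row_cons0.
exact: (is_CTB bbar_c (is_CT_constraint (x := xbar) gc)).
Qed.

Lemma dotp_slack_grad t d : T t ->
  dotp (slack_grad t) d = (bbar t - g t xbar) * d 0 ord0 + g t (\row_k d 0 (lift ord0 k)).
Proof. by move=> Tt; rewrite dotp_row_cons -linear_dotp_grad //; exact: glin. Qed.

Lemma linear_kkt : exists N (lam : 'I_N -> R) (ts : 'I_N -> Z),
  (forall i, [/\ T (ts i), 0 <= lam i & lam i * (bbar (ts i) - g (ts i) xbar) = 0]) /\
  (forall y, f y + dotp cbar y = - \sum_(i < N) lam i * g (ts i) y).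
Proof.
have [Fxbar _] := xbar_opt.
have [lv obj_lv] : {lv | forall y, f y + dotp cbar y = dotp lv y}.
  by exists (grad f + cbar); exact: linear_obj_grad.
have [T0|/set0P [t0 Tt0]] := eqVneq T set0.
  exists 0%N, (fun=> 0), (fun i : 'I_0 => False_rect Z (notF (ltn_ord i))).
  by split=> [[]//|y]; rewrite big_ord0 oppr0 linear_obj_eq0.
have [xh xh_slater] := slater_bbar.
have [eps eps_gt0 eps_le] : exists2 eps, 0 < eps & forall t, T t -> eps <= bbar t - g t xh.
  apply: compact_continuous_pos_lbound => //.
    by apply: is_CTB => //; exact: is_CT_constraint.
  by move=> t Tt; rewrite subr_gt0; exact: xh_slater.
have We v : (slack_grad @` T) v -> dotp v (row_cons (-1) (xh - xbar)) <= - eps.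
  move=> [t Tt <-]; rewrite dotp_slack_grad // row_cons0.
  rewrite (_ : \row_k _ = xh - xbar); last by apply/rowP => k; rewrite mxE row_consS.
  have [gD gZ] := glin Tt; rewrite gD -(scaleN1r xbar) gZ.
  by have := eps_le t Tt; lra.
have [[d [Wd d_pos]]|[lam [ws [lamW z_comb]]]] :=
  compact_cone_alternative (row_cons 0 (- lv)) compact_slack_grad
    (ex_intro _ _ (ex_intro2 _ _ t0 Tt0 erefl)) eps_gt0 We.
  exfalso; move: d_pos; rewrite dotp_row_cons mul0r add0r dotpNl oppr_gt0.
  rewrite -obj_lv; apply/negP; rewrite -leNgt.
  apply: (linear_no_descent (sg := d 0 ord0)) => t Tt.
  by rewrite -dotp_slack_grad //; apply: Wd; exists t.
have [ts wts] : {ts : 'I_n.+1 -> Z & forall i, T (ts i) /\ slack_grad (ts i) = ws i}.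
  apply: (choice (P := fun i t => T t /\ slack_grad t = ws i)) => i.
  by have [_ [t Tt wt]] := lamW i; exists t.
have z_coord j : row_cons 0 (- lv) 0 j = \sum_i lam i * slack_grad (ts i) 0 j.
  by rewrite z_comb lincomb_coord; apply: eq_bigr => i _; rewrite (wts i).2.
exists n.+1, lam, ts; split => [i|y].
  have := z_coord ord0; rewrite row_cons0; under eq_bigr do rewrite row_cons0.
  move=> /esym/eqP; rewrite psumr_eq0 => [/allP/(_ i (mem_index_enum _))/eqP|j _].
    by have [Tt _] := wts i; have [lam_i _] := lamW i; split.
  apply: mulr_ge0; first exact: (lamW j).1.
  by rewrite subr_ge0; apply: Fxbar; exact: (wts j).1.
have lv_comb : lv = - lincomb lam (fun i => grad (g (ts i))).
  apply/rowP => k; have := z_coord (lift ord0 k); rewrite row_consS mxE => e.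
  rewrite [RHS]mxE lincomb_coord -[lv 0 k]opprK e.
  by congr (- _); apply: eq_bigr => i _; rewrite row_consS.
rewrite obj_lv lv_comb dotpNl dotp_lincomb; congr (- _).
apply: eq_bigr => i _; rewrite -linear_dotp_grad //; apply: glin; exact: (wts i).1.
Qed.

End LinearKKT.

Section LinearCase.
Variables (R : realType) (n : nat) (Z : metricType R) (T : set Z).
Variables (f : 'rV[R]_n -> R) (g : Z -> 'rV[R]_n -> R) (q : R).
Variables (cbar : 'rV[R]_n) (bbar : Z -> R) (xbar : 'rV[R]_n).
Hypotheses (cT : compact T)
  (gc : {within T `*` setT, continuous (fun p : Z * 'rV[R]_n => g p.1 p.2)})
  (bbar_c : is_CT T bbar) (xbar_opt : optsol T f g cbar bbar xbar).

Local Notation fbar := (supfun T f g cbar bbar xbar).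

Section Multipliers.
Variables (N : nat) (lam : 'I_N -> R) (ts : 'I_N -> Z).
Hypotheses (kkt : forall i,
    [/\ T (ts i), 0 <= lam i & lam i * (bbar (ts i) - g (ts i) xbar) = 0])
  (obj_rep : forall y, f y + dotp cbar y = - \sum_(i < N) lam i * g (ts i) y).

Lemma kkt_optsol b x : feas T g b x ->
  (forall i, lam i * b (ts i) = lam i * g (ts i) x) -> optsol T f g cbar b x.
Proof.
move=> Fx active; split=> // y Fy; rewrite !obj_rep lerN2.
apply: ler_sum => i _; rewrite -active.
by have [Tt lam_i _] := kkt i; exact: ler_wpM2l (Fy _ Tt).
Qed.

Lemma kkt_multiplier_slack x r i : 0 <= r -> fbar x <= r ->
  lam i * (bbar (ts i) - g (ts i) x) <= (1 + \sum_(j < N) lam j) * r.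
Proof.
move=> r0 fbar_r; pose u j := lam j * (g (ts j) x - bbar (ts j)).
have u_le j : u j <= lam j * r.
  have [Tt lam_j _] := kkt j.
  have := le_trans (supfun_ge_cons f cbar xbar cT gc bbar_c x Tt) fbar_r.
  exact: ler_wpM2l.
have sum_u : - r <= \sum_j u j.
  have := le_trans (supfun_ge_obj f cbar xbar cT gc bbar_c x) fbar_r.
  rewrite dotpBr (_ : \sum_j u j = - (f x + dotp cbar x) + (f xbar + dotp cbar xbar)).
    by lra.
  rewrite !obj_rep !opprK -sumrB; apply: eq_bigr => j _; rewrite /u.
  by have [_ _] := kkt j; lra.
have : \sum_(j < N | j != i) u j <= (\sum_(j < N) lam j) * r.
  apply: le_trans (_ : _ <= \sum_(j < N | j != i) lam j * r) _.
    by apply: ler_sum => j _; exact: u_le.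
  have [_ lam_i _] := kkt i.
  by rewrite mulr_suml [X in _ <= X](bigD1 i) //= lerDr mulr_ge0.
by move: sum_u; rewrite (bigD1 i) //= /u; lra.
Qed.

End Multipliers.

Hypotheses (slater_bbar : slater T g bbar)
  (flin : linear_fun f) (glin : forall t, T t -> linear_fun (g t)).

Lemma linear_rhs_perturbation : exists2 K, 0 < K & forall x, exists b,
  [/\ is_CT T b, optsol T f g cbar b x & supnormT T (b \- bbar) <= K * Num.max (fbar x) 0].
Proof.
have [N [lam [ts [kkt obj_rep]]]] := linear_kkt cT gc bbar_c slater_bbar flin glin xbar_opt.
have lam_ge0 i : 0 <= lam i by have [] := kkt i.
(* Zero multipliers contribute [0^-1 = 0] to Sinv; only positive ones matter. *)
set S1 := \sum_(i < N) lam i; set Sinv := \sum_(i < N) (lam i)^-1.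
have S1_ge0 : 0 <= S1 by rewrite sumr_ge0.
have inv_le i : (lam i)^-1 <= Sinv.
  by rewrite /Sinv (bigD1 i) //= lerDl sumr_ge0 // => j _; rewrite invr_ge0.
have Sinv_ge0 : 0 <= Sinv.
  by rewrite sumr_ge0 // => i _; rewrite invr_ge0.
set K := 1 + (1 + S1) * Sinv.
have K1 : 1 <= K by rewrite lerDl mulr_ge0 // addr_ge0.
exists K => [|x]; first exact: lt_le_trans ltr01 K1.
set r := Num.max (fbar x) 0.
have r0 : 0 <= r by rewrite le_max lexx orbT.
have fbar_r : fbar x <= r by rewrite le_max lexx.
have Kr : K * r = r + (1 + S1) * r * Sinv by rewrite /K; ring.
have cons_r t : T t -> g t x - bbar t <= r.
  by move=> Tt; exact: le_trans (supfun_ge_cons f cbar xbar cT gc bbar_c x Tt) fbar_r.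
pose b t := Num.max (g t x) (bbar t - K * r).
exists b; split.
- apply: is_CT_max; first exact: (is_CT_constraint (x := x) gc).
  by apply: is_CTB => //; exact: is_CT_cst.
- apply: (kkt_optsol kkt obj_rep) => [t Tt|i]; first by rewrite /b le_max lexx.
  have [->|lam_i] := eqVneq (lam i) 0; first by rewrite !mul0r.
  have lam_gt0 : 0 < lam i by rewrite lt_def lam_i lam_ge0.
  congr (_ * _); apply/max_idPl.
  have slack : bbar (ts i) - g (ts i) x <= (1 + S1) * r * (lam i)^-1.
    by rewrite [leRHS]mulrC ler_pdivlMl //; exact: kkt_multiplier_slack.
  have := ler_wpM2l (mulr_ge0 (addr_ge0 ler01 S1_ge0) r0) (inv_le i); lra.
apply: supnormT_le => [|t Tt /=]; first by rewrite mulr_ge0 // (le_trans ler01).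
have := cons_r t Tt; have := ler_wpM2r r0 K1; rewrite /b ler_norml mul1r.
by case: (leP (g t x) (bbar t - K * r)) => ? ? ?; apply/andP; split; lra.
Qed.

Lemma error_bound_of_optsol_rhs_calm (q_gt0 : 0 < q) :
  q_calm (is_CT T) (fun b b' : Z -> R => supnormT T (b \- b')) (@eucl_dist R n)
    (fun b => optsol T f g cbar b) q bbar xbar -> error_bound fbar q xbar.
Proof.
have [K K0 perturb] := linear_rhs_perturbation.
apply: (error_bound_of_q_calm q_gt0 (optsol_supfun cT gc bbar_c xbar_opt) (K := K)) => //.
by move=> b; exact: supnormT_ge0.
Qed.

End LinearCase.

Unset Implicit Arguments.

Theorem theorem4p7 (R : realType) (n : nat) (Z : metricType R) (T : set Z)
    (f : 'rV[R]_n -> R) (g : Z -> 'rV[R]_n -> R) (q : R)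
    (cbar : 'rV[R]_n) (bbar : Z -> R) (xbar : 'rV[R]_n) :
  compact T -> T != setT ->
  convex_fun f -> (forall t, T t -> convex_fun (g t)) ->
  {within T `*` setT, continuous (fun p : Z * 'rV[R]_n => g p.1 p.2)} ->
  0 < q -> q <= 1 ->
  is_CT T bbar ->
  optsol T f g cbar bbar xbar ->
  slater T g bbar ->
  let dCB := fun (cb cb' : 'rV[R]_n * (Z -> R)) =>
    Num.max (enorm (cb.1 - cb'.1)) (supnormT T (cb.2 \- cb'.2)) in
  let dB := fun (b b' : Z -> R) => supnormT T (b \- b') in
  let dAB := fun (ab ab' : R * (Z -> R)) =>
    Num.max (`|ab.1 - ab'.1| : R) (supnormT T (ab.2 \- ab'.2)) in
  let fbar := supfun T f g cbar bbar xbar in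
  let st_i := q_calm (fun cb => is_CT T cb.2) dCB (@eucl_dist R n)
      (fun cb => optsol T f g cb.1 cb.2) q (cbar, bbar) xbar in
  let st_ii := q_calm (is_CT T) dB (@eucl_dist R n)
      (fun b => optsol T f g cbar b) q bbar xbar in
  let st_iii := q_calm (fun ab => is_CT T ab.2) dAB (@eucl_dist R n)
      (levelmap T f g cbar) q (f xbar + dotp cbar xbar, bbar) xbar in
  let st_iv := exists tau : R, 0 < tau /\ exists delta : R, 0 < delta /\
      forall x, enorm (x - xbar) < delta ->
        tau * set_dist (@eucl_dist R n) x [set y | fbar y <= 0]
          <= powR (Num.max (fbar x) 0) q in
  [/\ (st_iii <-> st_iv), (st_iv -> st_i), (st_i -> st_ii) &
      (linear_fun f -> (forall t, T t -> linear_fun (g t)) ->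
        [/\ (st_i <-> st_ii), (st_ii <-> st_iii) & (st_iii <-> st_iv)])].
Proof.
move=> cT _ fconv gconv gc q_gt0 _ bbar_c xbar_opt slater_bbar.
move=> dCB dB dAB fbar st_i st_ii st_iii st_iv.
have iii_iv : st_iii -> st_iv by apply: error_bound_of_levelmap_calm.
have iv_iii : st_iv -> st_iii by apply: levelmap_calm_of_error_bound.
have iv_i : st_iv -> st_i by apply: optsol_calm_of_error_bound.
have i_ii : st_i -> st_ii by apply: optsol_rhs_calm.
split => // flin glin.
have ii_iv : st_ii -> st_iv by apply: error_bound_of_optsol_rhs_calm.
by split; split; tauto.
Qed.
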